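(* For every $k\in\mathbb{N}$ there exists a 2-coloring of the edges of $K_\mathbb{N}$ such that every set $X\subseteq\mathbb{N}$ which is $k$-wise self-intersecting in some color has upper density at most $1/(2k)$.
   Context: For a 2-coloring of $K_\mathbb{N}$ (vertex set $\mathbb{N}$) and a color $i$, let $N_i(v)$ be the set of vertices joined to $v$ by an edge of color $i$, and for finite nonempty $S$ let $N_i^\cap(S)=\bigcap_{v\in S}N_i(v)$. A set $X\subseteq\mathbb{N}$ is $k$-wise self-intersecting in color $i$ if for every nonempty $S\subseteq X$ with $|S|\le k$, the set $X\cap N_i^\cap(S)$ is infinite. Upper density: $\overline{d}(X)=\limsup_{t\to\infty}|X\cap\{1,\dots,t\}|/t$. *)

From HB Require Import structures.
From mathcomp Require Import all_boot all_order all_algebra.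
From mathcomp Require Import finmap.
From mathcomp Require Import all_classical all_reals all_analysis.
From mathcomp Require Import Rstruct Rstruct_topology.
Set Implicit Arguments. Unset Strict Implicit. Unset Printing Implicit Defensive.
Import Order.TTheory GRing.Theory Num.Theory.
Local Open Scope classical_set_scope.
Local Open Scope ring_scope.

(* A 2-coloring of the edges of K_N: c x y is the color (a bool) of edge {x,y},
   required symmetric (values on the diagonal are irrelevant). *)
Definition symmetric_coloring (c : nat -> nat -> bool) : Prop :=
  forall x y : nat, c x y = c y x.

Definition nbhd (c : nat -> nat -> bool) (i : bool) (v : nat) : set nat :=
  [set w | w <> v /\ c v w = i].

Definition common_nbhd (c : nat -> nat -> bool) (i : bool) (S : {fset nat}) : set nat :=
  [set w | forall v : nat, v \in S -> nbhd c i v w].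

Definition self_intersecting (k : nat) (c : nat -> nat -> bool) (i : bool)
    (X : set nat) : Prop :=
  forall S : {fset nat}, S != fset0 -> (forall v : nat, v \in S -> X v) ->
    leq (#|` S|)%fset k -> infinite_set (X `&` common_nbhd c i S).

Definition count_upto (X : set nat) (t : nat) : nat :=
  (\sum_(1 <= n < t.+1) (`[< X n >] : nat))%N.

Definition upper_density (X : set nat) : Rdefinitions.R :=
  limn_sup (fun t : nat => (count_upto X t)%:R / t%:R).

From HB Require Import structures.
From mathcomp Require Import all_boot all_order all_algebra.
From mathcomp Require Import finmap.
From mathcomp Require Import all_classical all_reals all_analysis.
From mathcomp Require Import Rstruct Rstruct_topology.
From mathcomp Require Import zify.
Import Order.TTheory GRing.Theory Num.Theory.
Local Open Scope classical_set_scope.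
Local Open Scope ring_scope.

(* Color the edge {x, y} with x < y by
     odd y  xor  (x = y mod 2k).
   Let X be k-wise self-intersecting in color i.
   1. Every element of X has parity ~~ i: otherwise take S = one element of X
      from each residue class mod 2k of parity i met by X (at most k of them);
      every y > max S joined to all of S in color i is impossible, whatever
      the parity of y, so X meets the common i-neighbourhood of S finitely.
   2. Hence X lies in a single residue class mod 2k: for a, b in X in
      different classes, no y in X above both is i-joined to both.
   3. Two distinct elements of such an X differ by at least 2k, so
      |X cap [1, t]| * 2k <= t + 2k, and the upper density is <= 1/(2k). *)

Definition parity_residue_coloring (k x y : nat) : bool :=
  odd (maxn x y) (+) (x %% (2 * k) == y %% (2 * k))%N.

Lemma parity_residue_coloring_sym k : symmetric_coloring (parity_residue_coloring k).
Proof. by move=> x y; rewrite /parity_residue_coloring maxnC eq_sym. Qed.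

Lemma parity_residue_coloring_lt k x y : (x < y)%N ->
  parity_residue_coloring k x y = odd y (+) (x %% (2 * k) == y %% (2 * k))%N.
Proof. by move=> /ltnW xy; rewrite /parity_residue_coloring (maxn_idPr xy). Qed.

Lemma odd_mod_double k x : odd (x %% (2 * k)) = odd x.
Proof. by rewrite odd_mod // oddM. Qed.

Lemma count_parity_residues k (i : bool) :
  count (fun r => odd r == i) (iota 0 (2 * k)) = k.
Proof.
elim: k => [//|k IH].
rewrite (_ : (2 * k.+1 = 2 * k + 2)%N); last by rewrite mulnS addnC.
rewrite iotaD count_cat IH /= add0n oddM /=.
by case: (i); rewrite /= ?addn0 ?addn1.
Qed.

Lemma residue_representatives (m : nat) (X : set nat) (P : pred nat) :
  (0 < m)%N ->
  exists S : {fset nat},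
    [/\ forall v, v \in S -> X v /\ P (v %% m)%N,
        (#|` S| <= count P (iota 0 m))%N
      & forall x, X x -> P (x %% m)%N -> exists2 v, v \in S & (v %% m = x %% m)%N].
Proof.
move=> m_gt0.
pose rep r := xget 0%N [set x | X x /\ (x %% m)%N = r].
pose R := [seq r <- iota 0 m | P r && `[< exists x, X x /\ (x %% m)%N = r >]].
have repP r : r \in R -> X (rep r) /\ (rep r %% m)%N = r.
  by rewrite mem_filter => /andP[/andP[_ /asboolP ex] _]; exact: (xgetPex 0%N ex).
have residueR x : X x -> P (x %% m)%N -> (x %% m)%N \in R.
  move=> Xx Px; rewrite mem_filter mem_iota add0n ltn_pmod // Px andbT /=.
  by rewrite andbT; apply/asboolP; exists x.
exists (seq_fset tt (map rep R)); split.
- move=> v; rewrite seq_fsetE => /mapP[r rR ->]; have [Xr ->] := repP r rR.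
  by move: rR; rewrite mem_filter => /andP[/andP[]].
- rewrite size_seq_fset (leq_trans (size_undup _)) // size_map size_filter.
  by apply: sub_count => r /andP[].
- move=> x Xx Px; exists (rep (x %% m)%N); last exact: (proj2 (repP _ (residueR x Xx Px))).
  by rewrite seq_fsetE map_f // residueR.
Qed.

Lemma finite_below_fset (A : set nat) (S : {fset nat}) :
  (forall y, A y -> (forall v, v \in S -> (v < y)%N) -> False) -> finite_set A.
Proof.
move=> bounded; apply: (@sub_finite_set _ _ `I_((\max_(v <- S) v)%N.+1)); last first.
  exact: finite_II.
move=> y Ay; rewrite /= ltnNge; apply/negP => maxS_le_y; apply: (bounded y Ay).
by move=> v vS; apply: leq_ltn_trans maxS_le_y; exact: leq_bigmax_seq.
Qed.

Section SelfIntersecting.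
Variables (k : nat) (i : bool) (X : set nat).
Hypothesis k_gt0 : (0 < k)%N.
Hypothesis X_self : self_intersecting k (parity_residue_coloring k) i X.

Lemma self_intersecting_parity x : X x -> odd x = ~~ i.
Proof.
move=> Xx; have [odd_xi|] := eqVneq (odd x) i; last by case: (i); case: (odd x).
exfalso.
have m_gt0 : (0 < 2 * k)%N by rewrite muln_gt0.
have [S [SX Sk Srep]] := @residue_representatives _ X (fun r => odd r == i) m_gt0.
have [v0 v0S v0x] := Srep x Xx (introT eqP (etrans (odd_mod_double k x) odd_xi)).
have Sne : S != fset0 by apply/negP => /eqP S0; rewrite S0 in_fset0 in v0S.
rewrite count_parity_residues in Sk.
have := X_self S Sne (fun v vS => proj1 (SX v vS)) Sk; apply.
apply: (@finite_below_fset _ S) => y [Xy common] above.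
(* y is i-joined to the representative of its own class if odd y = i, and
   to the representative v0 of x's class (a class of the other parity)
   otherwise; both contradict the definition of the coloring. *)
have [oy|oy] := eqVneq (odd y) i.
- have [v vS vy] := Srep y Xy (introT eqP (etrans (odd_mod_double k y) oy)).
  have [_] := common v vS.
  by rewrite parity_residue_coloring_lt ?above // vy eqxx oy; case: (i).
- have [_] := common v0 v0S; rewrite parity_residue_coloring_lt ?above //.
  have -> : (v0 %% (2 * k) == y %% (2 * k))%N = false.
    apply/negP => /eqP v0y; move: oy.
    by rewrite -(odd_mod_double k y) -v0y v0x odd_mod_double odd_xi eqxx.
  by rewrite addbF => oyi; rewrite oyi eqxx in oy.
Qed.

Lemma self_intersecting_residue a b :
  X a -> X b -> (a %% (2 * k) = b %% (2 * k))%N.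
Proof.
move=> Xa Xb; have [//|ab] := eqVneq (a %% (2 * k))%N (b %% (2 * k))%N; exfalso.
have k_ge2 : (2 <= k)%N.
  case: k k_gt0 ab => [|[|//]] // _.
  by rewrite muln1 !modn2 !self_intersecting_parity // eqxx.
have aS : a \in [fset a; b]%fset by rewrite !inE eqxx.
have bS : b \in [fset a; b]%fset by rewrite !inE eqxx orbT.
have Sne : [fset a; b]%fset != fset0.
  by apply/negP => /eqP S0; rewrite S0 in_fset0 in aS.
have SX v : v \in [fset a; b]%fset -> X v by rewrite !inE => /orP[]/eqP->.
have Sk : (#|` [fset a; b]%fset| <= k)%N.
  by rewrite (leq_trans _ k_ge2) // cardfs2; case: (a != b).
have := X_self _ Sne SX Sk; apply.
apply: (@finite_below_fset _ [fset a; b]%fset) => y [Xy common] above.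
have [_] := common a aS; have [_] := common b bS.
rewrite !parity_residue_coloring_lt ?above // self_intersecting_parity //.
move=> b_y a_y; move/eqP: ab; apply.
have /eqP -> : (a %% (2 * k) == y %% (2 * k))%N by move: a_y; case: (i); case: (_ == _).
by apply/esym/eqP; move: b_y; case: (i); case: (_ == _).
Qed.

End SelfIntersecting.

Lemma residue_class_gap (m : nat) (X : set nat) :
  (forall a b, X a -> X b -> (a %% m = b %% m)%N) ->
  forall a b, X a -> X b -> (a < b)%N -> (a + m <= b)%N.
Proof.
move=> same a b Xa Xb ab.
have m_dvd : (m %| b - a)%N by rewrite -(eqn_mod_dvd _ (ltnW ab)) (same b a Xb Xa).
by rewrite -(subnKC (ltnW ab)) leq_add2l dvdn_leq // subn_gt0.
Qed.

Section GappedCounting.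
Variables (m : nat) (X : set nat).
Hypothesis X_gap : forall a b, X a -> X b -> (a < b)%N -> (a + m <= b)%N.

Lemma count_upto_le t : (count_upto X t <= t)%N.
Proof.
apply: (@leq_trans (\sum_(1 <= n < t.+1) 1)%N); first by apply: leq_sum => n _; exact: leq_b1.
by rewrite sum_nat_const_nat subn1 muln1.
Qed.

Lemma count_upto_witness t :
  count_upto X t = 0%N \/
  exists2 y, X y & (y <= t)%N /\ ((count_upto X t).-1 * m + 1 <= y)%N.
Proof.
elim: t => [|t IH]; first by left; rewrite /count_upto big_geq.
rewrite /count_upto big_nat_recr //= -/(count_upto X t).
case: (asboolP (X t.+1)) => Xt /=; last first.
  rewrite addn0; case: IH => [->|[y Xy [yt hy]]]; first by left.
  by right; exists y => //; split=> //; rewrite (leq_trans yt).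
right; exists t.+1 => //; split=> //; rewrite addn1 /=.
case: IH => [->|[y Xy [yt hy]]]; first by rewrite mul0n.
have := X_gap _ _ Xy Xt (leq_ltn_trans yt (ltnSn t)).
by case: (count_upto X t) hy => [|g] /=; lia.
Qed.

Lemma count_upto_gap t : (count_upto X t * m <= t + m)%N.
Proof.
have [->|[y _ [yt hy]]] := count_upto_witness t; first by rewrite mul0n.
by case: (count_upto X t) hy => [|g] /=; lia.
Qed.

End GappedCounting.

Lemma limn_sup_le (u : nat -> Rdefinitions.R) (l : Rdefinitions.R) :
  (forall n, 0 <= u n <= 1) -> (forall n, u n.+1 <= l + n.+1%:R^-1) ->
  limn_sup u <= l.
Proof.
move=> u01 u_le.
have ub : has_ubound (range u) by exists 1 => _ [n _ <-]; case/andP: (u01 n).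
have lb : has_lbound (range (sups u)).
  exists 0 => _ [n _ <-]; apply: (le_trans (proj1 (andP (u01 n)))).
  by apply: ub_le_sup; [exact: has_ubound_sdrop | exists n => /=].
have cvg_sups : cvgn (sups u).
  by apply: nonincreasing_is_cvgn => //; exact: nonincreasing_sups.
apply/ler_addgt0Pr => e e_gt0; apply: limr_le => //.
have [N _ HN] := near_infty_natSinv_lt (PosNum e_gt0).
near=> n.
have Nn : (N < n)%N by near: n; exists N.+1.
apply: ge_sup; first by exists (u n); exists n => /=.
move=> _ [[|j] /= nj <-]; first by rewrite leqn0 in nj; move: Nn; rewrite (eqP nj).
apply: (le_trans (u_le j)); rewrite lerD2l ltW // HN //=.
by rewrite -ltnS (leq_trans Nn nj).
Unshelve. all: by end_near.
Qed.

Lemma upper_density_gap (m : nat) (X : set nat) : (0 < m)%N ->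
  (forall a b, X a -> X b -> (a < b)%N -> (a + m <= b)%N) ->
  upper_density X <= 1 / m%:R.
Proof.
move=> m_gt0 gap; apply: limn_sup_le => n.
  case: n => [|n]; first by rewrite /count_upto big_geq // mul0r lexx ler01.
  by rewrite divr_ge0 //= ler_pdivrMr ?ltr0n // mul1r ler_nat count_upto_le.
have m_pos : (0 : Rdefinitions.R) < m%:R by rewrite ltr0n.
have n_pos : (0 : Rdefinitions.R) < n.+1%:R by rewrite ltr0n.
rewrite ler_pdivrMr // mulrDl mulVf ?gt_eqF // -lerBlDr mul1r mulrC.
rewrite ler_pdivlMr // mulrBl mul1r lerBlDr -natrM -natrD ler_nat.
exact: count_upto_gap.
Qed.

Theorem mainTheorem11 (k : nat) (hk : (1 <= k)%N) :
  exists c : nat -> nat -> bool, symmetric_coloring c /\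
    forall (i : bool) (X : set nat),
      (forall n : nat, X n -> (1 <= n)%N) ->
      self_intersecting k c i X ->
      upper_density X <= 1 / (2 * k)%:R.
Proof.
exists (parity_residue_coloring k); split; first exact: parity_residue_coloring_sym.
move=> i X _ X_self.
apply: upper_density_gap; first by rewrite muln_gt0.
apply: residue_class_gap => a b.
exact: (@self_intersecting_residue k i X hk X_self a b).
Qed.
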